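(* For all programs $P,S_1,S_2,Q,\gamma$: if the operational triples $\{|P|\}\ S_1\ \{|Q|\}$ and $\{|Q|\}\ S_2\ \{|\gamma|\}$ hold, then $\{|P|\}\ S_1;S_2\ \{|\gamma|\}$ holds.
   Context: Programs are statements of a sequential imperative language with a standard small-step operational semantics over program states. $\mathrm{behs}(P)$ is the set of pairs (initial state, final state) of finite terminating executions of $P$; $(s,u)\in\mathrm{behs}(P;Q)$ iff there is $t$ with $(s,t)\in\mathrm{behs}(P)$ and $(t,u)\in\mathrm{behs}(Q)$. The post-state set is $\mathrm{pst}(P)=\{t:\exists s,\ (s,t)\in\mathrm{behs}(P)\}$. The operational triple $\{|P|\}\ S\ \{|Q|\}$ is defined to mean $\mathrm{pst}(P;S)\subseteq\mathrm{pst}(Q)$. *)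

From Stdlib Require Import ZArith Relations.

Definition var := nat.
Definition state := var -> Z.
Definition aexp := state -> Z.
Definition bexp := state -> bool.

Inductive stmt : Type :=
| Skip : stmt
| Assign : var -> aexp -> stmt
| Seq : stmt -> stmt -> stmt
| If : bexp -> stmt -> stmt -> stmt
| While : bexp -> stmt -> stmt.

Definition update (s : state) (x : var) (v : Z) : state :=
  fun y => if Nat.eqb y x then v else s y.

Inductive step : stmt * state -> stmt * state -> Prop :=
| step_assign : forall x a s, step (Assign x a, s) (Skip, update s x (a s))
| step_seq_skip : forall Q s, step (Seq Skip Q, s) (Q, s)
| step_seq : forall P P' Q s s',
    step (P, s) (P', s') -> step (Seq P Q, s) (Seq P' Q, s')
| step_if_true : forall b P Q s, b s = true -> step (If b P Q, s) (P, s)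
| step_if_false : forall b P Q s, b s = false -> step (If b P Q, s) (Q, s)
| step_while : forall b P s,
    step (While b P, s) (If b (Seq P (While b P)) Skip, s).

Definition steps := clos_refl_trans _ step.

Definition behs (P : stmt) (s t : state) : Prop := steps (P, s) (Skip, t).

Definition pst (P : stmt) (t : state) : Prop := exists s, behs P s t.

Definition optriple (P S Q : stmt) : Prop :=
  forall t, pst (Seq P S) t -> pst Q t.

(* Every terminating run of [A; B] first runs [A] to [Skip] inside the
   sequence, then steps into [B]; so the behaviours of a sequence are the
   relational composition of the behaviours of its parts.  Hence a post-state
   of [P; (S1; S2)] arises from some post-state [m] of [P; S1] by running [S2];
   the first triple makes [m] a post-state of [Q], so the final state is a
   post-state of [Q; S2], and the second triple concludes. *)
From Stdlib Require Import Relations.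

Lemma steps_seq_left A A' B s s' :
  steps (A, s) (A', s') -> steps (Seq A B, s) (Seq A' B, s').
Proof.
  intro H; apply clos_rt_rt1n in H; apply clos_rt1n_rt.
  remember (A, s) as c eqn:Ec; remember (A', s') as c' eqn:Ec'.
  revert A s Ec; induction H as [c | c [A1 s1] c' Hstep _ IH];
    intros A s Ec; subst.
  - injection Ec as -> ->; constructor.
  - econstructor; [apply step_seq, Hstep | exact (IH eq_refl _ _ eq_refl)].
Qed.

Lemma behs_seq_intro A B s m t :
  behs A s m -> behs B m t -> behs (Seq A B) s t.
Proof.
  intros HA HB; eapply rt_trans; [apply steps_seq_left, HA |].
  eapply rt_trans; [apply rt_step, step_seq_skip | exact HB].
Qed.

Lemma behs_seq_elim A B s t :
  behs (Seq A B) s t -> exists m, behs A s m /\ behs B m t.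
Proof.
  unfold behs; intro H; apply clos_rt_rt1n in H.
  remember (Seq A B, s) as c eqn:Ec; remember (Skip, t) as c' eqn:Ec'.
  revert A s Ec; induction H as [c | c c1 c' Hstep Hrest IH];
    intros A s Ec; subst; [discriminate |].
  inversion Hstep as [| ? ? | ? A' ? ? s' HA | | |]; subst.
  - exists s; split; [apply rt_refl | apply clos_rt1n_rt, Hrest].
  - destruct (IH eq_refl A' s' eq_refl) as (m & HAm & HBm).
    exists m; split; [eapply rt_trans; [apply rt_step, HA | exact HAm] | exact HBm].
Qed.

Lemma pst_seq A B t :
  pst (Seq A B) t <-> exists m, pst A m /\ behs B m t.
Proof.
  split.
  - intros [s Hs]; destruct (behs_seq_elim _ _ _ _ Hs) as (m & HA & HB).
    exists m; split; [exists s; exact HA | exact HB].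
  - intros (m & [s HA] & HB); exists s; exact (behs_seq_intro _ _ _ _ _ HA HB).
Qed.

Theorem proposition8 (P S1 S2 Q gamma : stmt) :
  optriple P S1 Q -> optriple Q S2 gamma -> optriple P (Seq S1 S2) gamma.
Proof.
  intros H1 H2 t Ht.
  apply pst_seq in Ht as (m & HPm & HS).
  apply behs_seq_elim in HS as (m' & HS1 & HS2).
  assert (HQ : pst Q m') by (apply H1, pst_seq; eauto).
  apply H2, pst_seq; eauto.
Qed.
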